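(* Let $G(\mathcal V,\mathcal E)$ be a finite simple directed graph and $f\ge 0$ an integer, such that for every partition $X,Y,Z$ of $\mathcal V$ with $X,Y$ non-empty and $|Z|\le f$, either $X \Rightarrow_{\mathcal V - Z} Y$ or $Y \Rightarrow_{\mathcal V - Z} X$. Let $A,B,C,F$ be pairwise disjoint subsets of $\mathcal V$ with $|F|\le f$ and $A,B,C$ non-empty. If $A \Rightarrow_{\mathcal V - F} B$ and $A\cup B \Rightarrow_{\mathcal V - F} C$, then $A \Rightarrow_{\mathcal V - F} B\cup C$.
   Context: An $(X,y)$-path is a directed path from some node of $X$ to the node $y\notin X$; it excludes $F$ if it contains no node of $F$; $(X,y)$-paths are disjoint if they pairwise share only $y$. For pairwise disjoint $X,Y,F\subseteq\mathcal V$ with $|F|\le f$, $X \Rightarrow_{\mathcal V - F} Y$ means: $Y=\emptyset$, or every $y\in Y$ has at least $f+1$ pairwise disjoint $(X,y)$-paths excluding $F$. *)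

From mathcomp Require Import all_boot.
Set Implicit Arguments. Unset Strict Implicit. Unset Printing Implicit Defensive.

Definition XYpath (V : finType) (E : rel V) (X : {set V}) (y : V) (p : seq V) : bool :=
  if p is x :: s then [&& x \in X, path E x s, last x s == y & uniq p] else false.

Definition excludes (V : finType) (F : {set V}) (p : seq V) : bool :=
  all (fun v => v \notin F) p.

Definition disjoint_paths (V : finType) (y : V) (ps : seq (seq V)) : Prop :=
  forall i j, i < j -> j < size ps ->
    forall v, v \in nth [::] ps i -> v \in nth [::] ps j -> v = y.

Definition reach (V : finType) (E : rel V) (f : nat) (F X Y : {set V}) : Prop :=
  Y = set0 \/
  forall y, y \in Y ->
    exists ps : seq (seq V),
      [/\ f.+1 <= size ps,
          all (fun p => XYpath E X y p && excludes F p) ps &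
          disjoint_paths y ps].

(* Only the two reachability assumptions and the disjointness of C from A, B, F
   and of A from F are needed: the lemma is an instance of Menger's theorem.  Fix c in
   C and work in the graph with F and c deleted.  A set S of at most f vertices
   cannot separate A from the in-neighbours of c: one of the f+1 disjoint
   (A u B, c)-paths misses S - c; if it starts at some b in B, then b is not in S
   (b <> c), and one of the f+1 disjoint (A, b)-paths misses S - b, hence S.  The
   concatenation is an A-c walk missing S - c, whose part before c misses S.
   Menger's theorem then yields f+1 disjoint walks from A to in-neighbours of c,
   and appending c and shortcutting cycles turns them into (A, c)-paths.

   Menger's theorem is proved by induction on the number of edges: if deleting
   an edge xy leaves no separator of size < k we are done; otherwise such a
   separator Y gives the separators x + Y and y + Y of size k of the whole graph,
   and linkages from A to x + Y and from y + Y to B in the smaller graph meet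
   only at Y, so they splice into a linkage from A to B. *)

From mathcomp Require Import all_boot.
From Stdlib Require Import Classical.
Set Implicit Arguments. Unset Strict Implicit. Unset Printing Implicit Defensive.

Section PathCuts.
Variables (T : eqType) (e : rel T) (P : pred T).

Lemma path_cut_first h s : path e h s -> has P (h :: s) ->
  exists t s', [/\ s = t ++ s', path e h t, P (last h t) & ~~ has P (belast h t)].
Proof.
elim: s h => [|z s IH] h /=; first by rewrite orbF => _ Ph; exists [::], [::].
case/andP=> ehz pzs; have [Ph _|nPh /= Hs] := boolP (P h); first by exists [::], (z :: s).
have [t [s' [-> pzt Pt nPt]]] := IH z pzs Hs.
by exists (z :: t), s'; rewrite /= ehz (negbTE nPh).
Qed.

Lemma path_cut_last h s : path e h s -> has P (h :: s) ->
  exists s1 h' t, [/\ h :: s = s1 ++ h' :: t, path e h' t, P h', ~~ has P t & {subset t <= s}].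
Proof.
elim: s h => [|z s IH] h /=; first by rewrite orbF => _ Ph; exists [::], h, [::].
case/andP=> ehz pzs; have [Hs _|nHs] := boolP (has P (z :: s)).
  have [s1 [h' [t [es pt Ph' nPt ts]]]] := IH z pzs Hs.
  exists (h :: s1), h', t; split=> //; first by rewrite es.
  by move=> w /ts ws; rewrite inE ws orbT.
case/orP=> [Ph|Hs]; last by rewrite /= Hs in nHs.
by exists [::], h, (z :: s); split; rewrite //= ehz.
Qed.

Lemma uniq_path_refl h s :
  path (fun u v => (u == v) || e u v) h s -> uniq (h :: s) -> path e h s.
Proof.
elim: s h => //= z s IH h /andP[/orP[/eqP hz|ehz] pzs] /andP[hs us].
  by move: hs; rewrite hz mem_head.
by rewrite ehz IH.
Qed.

End PathCuts.

Lemma seq_choice (T : eqType) (U : Type) (u0 : U) (R : T -> U -> Prop) (s : seq T) :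
  {in s, forall x, exists y, R x y} -> exists g : T -> U, {in s, forall x, R x (g x)}.
Proof.
elim: s => [|x s IH] H; first by exists (fun=> u0).
have [y Rxy] := H x (mem_head x s).
have [g Hg] : exists g : T -> U, {in s, forall x, R x (g x)}.
  by apply: IH => z zs; apply: H; rewrite inE zs orbT.
by exists (fun z => if z == x then y else g z) => z; rewrite inE; case: eqP => [->|_ /Hg].
Qed.

Section DisjointFamilies.
Variable V : finType.
Implicit Types (p q : seq V) (ps : seq (seq V)).

Definition disjoint_family ps := pairwise (fun p q : seq V => [disjoint p & q]) ps.

Lemma disjoint_family_mem ps p q :
  disjoint_family ps -> p \in ps -> q \in ps -> p != q -> [disjoint p & q].
Proof.
elim: ps => //= r ps IH /andP[rps dps]; rewrite !inE.
case/predU1P=> [->|pps] /predU1P[->|qps]; rewrite ?eqxx // => neq.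
- exact: (allP rps).
- by rewrite disjoint_sym; apply: (allP rps).
- exact: IH.
Qed.

Lemma uniq_map_disjoint_family (h : seq V -> V) ps :
  {in ps, forall p, h p \in p} -> disjoint_family ps -> uniq (map h ps).
Proof.
elim: ps => //= r ps IH hin /andP[rps dps].
rewrite IH ?andbT // => [|p pps]; last by apply: hin; rewrite inE pps orbT.
apply/mapP=> [[p pps hrp]]; have := allP rps p pps.
by rewrite disjoint_has => /hasPn/(_ _ (hin r (mem_head r ps))); rewrite hrp hin // inE pps orbT.
Qed.

Lemma disjoint_family_shrink (P : pred (seq V)) ps :
  {in ps, forall p, exists2 q, P q & {subset q <= p}} -> disjoint_family ps ->
  exists2 qs, size qs = size ps & all P qs && disjoint_family qs.
Proof.
move=> shrink dps.
have [g Hg] : exists g : seq V -> seq V, {in ps, forall p, P (g p) /\ {subset g p <= p}}.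
  by apply: (seq_choice [::] (R := fun p q => P q /\ {subset q <= p})) => p /shrink[q]; exists q.
exists (map g ps); first by rewrite size_map.
rewrite all_map /disjoint_family pairwise_map; apply/andP; split.
  by apply/allP=> p /Hg[].
apply: sub_in_pairwise (allss ps) dps => p q /Hg[_ gp] /Hg[_ gq].
by apply: disjointW; apply/subsetP.
Qed.

End DisjointFamilies.

Section Menger.
Variable V : finType.
Implicit Types (e : rel V) (A B S X Y : {set V}) (p q : seq V) (ps : seq (seq V)).

Definition walk e A B p :=
  if p is h :: t then [&& h \in A, path e h t & last h t \in B] else false.

Definition walk_entering e A X p :=
  if p is h :: t then [&& h \in A, path e h t, last h t \in X & [disjoint belast h t & X]]
  else false.

Definition walk_leaving e X B p :=
  if p is h :: t then [&& h \in X, path e h t, last h t \in B & [disjoint t & X]]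
  else false.

Definition separator e A B S := forall p, walk e A B p -> ~~ [disjoint p & S].

Definition linkage e A B ps := all (walk e A B) ps && disjoint_family ps.

Definition edges e := [set uv : V * V | e uv.1 uv.2 & uv.1 != uv.2].

Definition del_edge e x y : rel V := fun u v => e u v && ((u, v) != (x, y)).

Lemma linkage_sub e e' A B ps : subrel e e' -> linkage e A B ps -> linkage e' A B ps.
Proof.
move=> ee' /andP[wps dps]; apply/andP; split=> //; apply/allP=> -[|h t] /(allP wps) //=.
by case/and3P=> hA pt lB; rewrite hA lB (sub_path ee' pt).
Qed.

Lemma walk_meets_target e A B p : walk e A B p -> ~~ [disjoint p & B].
Proof.
case: p => //= h t /and3P[_ _ lB]; rewrite disjoint_has negbK.
by apply/hasP; exists (last h t); first exact: mem_last.
Qed.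

Lemma walk_meets_source e A B p : walk e A B p -> ~~ [disjoint p & A].
Proof.
case: p => //= h t /and3P[hA _ _]; rewrite disjoint_has negbK.
by apply/hasP; exists h; first exact: mem_head.
Qed.

Lemma walk_cat e A C b p s :
  walk e A [set b] p -> walk e [set b] C (b :: s) -> walk e A C (p ++ s).
Proof.
case: p => //= h t /and3P[hA pt /set1P lb] /and3P[_ ps lC].
by rewrite hA cat_path pt lb ps last_cat lb.
Qed.

Lemma walk_cut_entering e A B X p : walk e A B p -> ~~ [disjoint p & X] ->
  exists2 q, walk_entering e A X q & {subset q <= p}.
Proof.
case: p => //= h t /and3P[hA pt _]; rewrite disjoint_has negbK => hX.
have [t1 [t2 [et pt1 lX nX]]] := path_cut_first pt hX.
exists (h :: t1); first by rewrite /= hA pt1 lX disjoint_has.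
by move=> w; rewrite !inE et mem_cat => /predU1P[->|->]; rewrite ?eqxx ?orbT.
Qed.

Lemma walk_cut_leaving e A B X p : walk e A B p -> ~~ [disjoint p & X] ->
  exists2 q, walk_leaving e X B q & {subset q <= p}.
Proof.
case: p => //= h t /and3P[_ pt lB]; rewrite disjoint_has negbK => hX.
have [s1 [h' [t' [et pt' h'X nX _]]]] := path_cut_last pt hX.
exists (h' :: t'); last by move=> w wt; rewrite et mem_cat wt orbT.
have ll : last h' t' = last h t by rewrite -[last h t]/(last h (h :: t)) et last_cat.
by rewrite /= h'X pt' ll lB disjoint_has.
Qed.

Lemma path_del_edge_src e x y h t :
  x \notin belast h t -> path e h t -> path (del_edge e x y) h t.
Proof.
elim: t h => //= z t IH h; rewrite inE negb_or => /andP[xh xt] /andP[ehz pzt].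
by rewrite IH // andbT /del_edge ehz xpair_eqE (eq_sym h) (negbTE xh).
Qed.

Lemma path_del_edge_dst e x y h t :
  y \notin t -> path e h t -> path (del_edge e x y) h t.
Proof.
elim: t h => //= z t IH h; rewrite inE negb_or => /andP[yz yt] /andP[ehz pzt].
by rewrite IH // andbT /del_edge ehz xpair_eqE (eq_sym z) (negbTE yz) andbF.
Qed.

Lemma card_edges_del_edge e x y :
  e x y -> x != y -> #|edges (del_edge e x y)| < #|edges e|.
Proof.
move=> exy xy; rewrite [X in _ < X](cardsD1 (x, y)) inE /= exy xy add1n ltnS.
apply/subset_leq_card/subsetP => -[u v]; rewrite !inE /= /del_edge.
by case/andP=> /andP[-> ->] ->.
Qed.

Lemma del_edge_refl e x y : reflexive e -> x != y -> reflexive (del_edge e x y).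
Proof. by move=> er xy u; rewrite /del_edge er; apply: contra xy => /eqP[<- <-]. Qed.

Lemma separator_del_edge_src e x y A B Y :
  separator (del_edge e x y) A B Y -> separator e A B (x |: Y).
Proof.
move=> Ysep [|h t] //= /and3P[hA pt lB]; apply/negP=> dX.
have xp : x \notin h :: t by rewrite (disjointFl dX (setU11 x Y)).
have /Ysep : walk (del_edge e x y) A B (h :: t).
  by rewrite /= hA lB path_del_edge_src //; apply: contra xp => /mem_belast.
by rewrite (disjointWr (subsetUr [set x] Y) dX).
Qed.

Lemma separator_del_edge_dst e x y A B Y :
  separator (del_edge e x y) A B Y -> separator e A B (y |: Y).
Proof.
move=> Ysep [|h t] //= /and3P[hA pt lB]; apply/negP=> dX.
have yp : y \notin h :: t by rewrite (disjointFl dX (setU11 y Y)).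
have /Ysep : walk (del_edge e x y) A B (h :: t).
  by rewrite /= hA lB path_del_edge_dst //; apply: contra yp => yt; rewrite inE yt orbT.
by rewrite (disjointWr (subsetUr [set y] Y) dX).
Qed.

Lemma separator_entering e x y A B X S : x \in X -> separator e A B X ->
  separator (del_edge e x y) A X S -> separator e A B S.
Proof.
move=> xX Xsep Ssep p pw; have [q qw qp] := walk_cut_entering pw (Xsep p pw).
have /Ssep : walk (del_edge e x y) A X q.
  case: q qw {qp} => //= h t /and4P[-> pt -> dt].
  by rewrite path_del_edge_src // (disjointFl dt xX).
by apply: contra => dp; apply: disjointWl dp; apply/subsetP.
Qed.

Lemma separator_leaving e x y A B X S : y \in X -> separator e A B X ->
  separator (del_edge e x y) X B S -> separator e A B S.
Proof.
move=> yX Xsep Ssep p pw; have [q qw qp] := walk_cut_leaving pw (Xsep p pw).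
have /Ssep : walk (del_edge e x y) X B q.
  case: q qw {qp} => //= h t /and4P[-> pt -> dt].
  by rewrite path_del_edge_dst // (disjointFl dt yX).
by apply: contra => dp; apply: disjointWl dp; apply/subsetP.
Qed.

Lemma notin_card_setU1 (x : V) Y k : #|Y| < k -> k <= #|x |: Y| -> x \notin Y.
Proof. by rewrite cardsU1; case: (x \in Y) => //= Yk; rewrite add0n leqNgt Yk. Qed.

Lemma linkage_no_edges e A B k : (forall u v, e u v -> u = v) ->
  (forall S, separator e A B S -> k <= #|S|) -> exists2 ps, size ps = k & linkage e A B ps.
Proof.
move=> e_id sepk.
have path_const h t : path e h t -> last h t = h.
  by elim: t h => //= z t IH h /andP[/e_id -> /IH].
have /sepk kAB : separator e A B (A :&: B).
  by case=> //= h t /and3P[hA /path_const -> hB]; rewrite disjoint_has /= inE hA hB.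
exists [seq [:: v] | v <- take k (enum (A :&: B))].
  by rewrite size_map size_takel // -cardE.
rewrite /linkage all_map /disjoint_family pairwise_map; apply/andP; split.
  by apply/allP=> v /mem_take; rewrite mem_enum !inE /=.
have := take_uniq k (enum_uniq (mem (A :&: B))); rewrite uniq_pairwise.
by apply: sub_pairwise => u v /= uv; rewrite disjoint_has /= orbF mem_seq1.
Qed.

Section Splice.
Variables (e e' : rel V) (x y : V) (A B Y : {set V}) (Ps Qs : seq (seq V)).
Hypotheses (e_refl : reflexive e) (e'e : subrel e' e) (exy : e x y).
Hypotheses (xY : x \notin Y) (yY : y \notin Y) (Ysep : separator e' A B Y).
Hypotheses (Ps_walks : all (walk_entering e' A (x |: Y)) Ps) (Ps_disj : disjoint_family Ps).
Hypotheses (Qs_walks : all (walk_leaving e' (y |: Y) B) Qs) (Qs_disj : disjoint_family Qs).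
Hypothesis Qs_size : #|y |: Y| <= size Qs.

Lemma entering_leaving_meet p q z :
  walk_entering e' A (x |: Y) p -> walk_leaving e' (y |: Y) B q -> z \in p -> z \in q ->
  [/\ z \in Y, z = last x p & z = head x q].
Proof.
case: p => // h t /and4P[hA pt lX dt]; case: q => // h2 t2 /and4P[h2X pt2 lB dt2] zp zq.
have inX v : v \in Y -> (v \in x |: Y) && (v \in y |: Y) by move=> vY; rewrite !inE vY !orbT.
have zY : z \in Y.
  have := path_cut_first (P := pred1 z) pt; rewrite has_pred1 => /(_ zp).
  case=> t1 [t1' [et pt1 /eqP lz _]].
  have := path_cut_last (P := pred1 z) pt2; rewrite has_pred1 => /(_ zq).
  case=> r1 [z' [r2 [eq pr2 /eqP z'z _ r2t2]]]; subst z'.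
  have /Ysep : walk e' A B (h :: t1 ++ r2).
    rewrite /= hA cat_path pt1 lz pr2 last_cat lz.
    by rewrite -[last h2 t2]/(last h2 (h2 :: t2)) eq last_cat in lB.
  rewrite disjoint_has negbK => /hasP[w]; rewrite -cat_cons mem_cat => /orP[wp|/r2t2 wt2] wY.
    move: wp; rewrite lastI lz mem_rcons inE => /predU1P[<- //|wb].
    have wb' : w \in belast h t by rewrite et belast_cat mem_cat wb.
    by move/inX: wY; rewrite (disjointFr dt wb').
  by move/inX: wY; rewrite (disjointFr dt2 wt2) andbF.
split=> //=.
  move: zp; rewrite lastI mem_rcons inE => /predU1P[//|zb].
  by move/inX: zY; rewrite (disjointFr dt zb).
move: zq; rewrite inE => /predU1P[//|zt2].
by move/inX: zY; rewrite (disjointFr dt2 zt2) andbF.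
Qed.

(* [tgt] is the bijection from [x |: Y] onto [y |: Y] along the deleted edge,
   and [mate p] is the walk of [Qs] starting where [tgt] sends the end of [p]. *)
Let tgt v := if v == x then y else v.
Let mate p := nth [::] Qs (index (tgt (last x p)) (map (head x) Qs)).

Lemma mem_last_Ps p : p \in Ps -> last x p \in p.
Proof. by move/(allP Ps_walks); case: p => // h t _; exact: (mem_last h t). Qed.

Lemma last_Ps_in p : p \in Ps -> last x p \in x |: Y.
Proof. by move/(allP Ps_walks); case: p => // h t /and4P[]. Qed.

Lemma mem_head_Qs q : q \in Qs -> head x q \in q.
Proof. by move/(allP Qs_walks); case: q => // h t _; apply: mem_head. Qed.

Lemma head_Qs_in q : q \in Qs -> head x q \in y |: Y.
Proof. by move/(allP Qs_walks); case: q => // h t /and4P[]. Qed.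

Lemma heads_Qs_cover : {subset y |: Y <= map (head x) Qs}.
Proof.
have uH := uniq_map_disjoint_family mem_head_Qs Qs_disj.
have sub : {subset map (head x) Qs <= enum (y |: Y)}.
  by move=> v /mapP[q qQ ->]; rewrite mem_enum head_Qs_in.
have [|_ eqH] := uniq_min_size uH sub; first by rewrite size_map -cardE.
by move=> v vX; rewrite eqH mem_enum.
Qed.

Lemma tgt_in v : v \in x |: Y -> tgt v \in y |: Y.
Proof. by rewrite /tgt !inE; case: eqP => [_ _|_ /= ->]; rewrite ?eqxx ?orbT. Qed.

Lemma tgt_inY v : tgt v \in Y -> tgt v = v.
Proof. by rewrite /tgt; case: eqP => // _; rewrite (negPf yY). Qed.

Lemma tgt_inj : {in x |: Y &, injective tgt}.
Proof.
have tgt_x : tgt x = y by rewrite /tgt eqxx.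
have tgt_id v : v \in Y -> tgt v = v.
  by rewrite /tgt; case: eqP => // ->; rewrite (negPf xY).
move=> u v; rewrite !inE => /predU1P[->|uY] /predU1P[->|vY] //.
- by rewrite tgt_x tgt_id // => yv; rewrite -yv (negPf yY) in vY.
- by rewrite tgt_x tgt_id // => uy; rewrite uy (negPf yY) in uY.
- by rewrite !tgt_id.
Qed.

Lemma mate_spec p : p \in Ps -> mate p \in Qs /\ head x (mate p) = tgt (last x p).
Proof.
move=> pP; have /heads_Qs_cover hQ := tgt_in (last_Ps_in pP).
have iQ : index (tgt (last x p)) (map (head x) Qs) < size Qs.
  by rewrite -(size_map (head x)) index_mem.
by split; [apply: mem_nth | rewrite /mate -(nth_map [::] x) // nth_index].
Qed.

Lemma walk_splice p : p \in Ps -> walk e A B (p ++ mate p).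
Proof.
move=> pP; have [mQ hm] := mate_spec pP.
move: (allP Ps_walks p pP) (allP Qs_walks _ mQ) hm.
case: p {pP mQ} => // h t; case: (mate (h :: t)) => // h2 t2.
case/and4P=> hA pt _ _ /and4P[_ pt2 lB _] /= h2E.
rewrite hA cat_path (sub_path e'e pt) /= (sub_path e'e pt2) last_cat /= lB !andbT h2E /tgt.
by case: eqP => [->|_]; rewrite ?exy ?e_refl.
Qed.

Lemma disjoint_mate p p' : p \in Ps -> p' \in Ps -> [disjoint p & p'] -> [disjoint p & mate p'].
Proof.
move=> pP p'P dpp'; have [mQ hm] := mate_spec p'P.
rewrite disjoint_has; apply/hasPn=> w wp; apply/negP=> wm.
have [wY wl wh] := entering_leaving_meet (allP Ps_walks p pP) (allP Qs_walks _ mQ) wp wm.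
have ll : last x p = last x p' by rewrite -wl wh hm tgt_inY // -hm -wh.
by move: (mem_last_Ps p'P); rewrite -ll (disjointFr dpp' (mem_last_Ps pP)).
Qed.

Lemma disjoint_splice p p' : p \in Ps -> p' \in Ps -> [disjoint p & p'] ->
  [disjoint p ++ mate p & p' ++ mate p'].
Proof.
move=> pP p'P dpp'; have dp'p : [disjoint p' & p] by rewrite disjoint_sym.
rewrite disjoint_cat ![[disjoint _ & p' ++ _]]disjoint_sym !disjoint_cat -!andbA.
apply/and4P; split=> //; first by rewrite disjoint_sym disjoint_mate.
  exact: disjoint_mate.
have [mQ hm] := mate_spec pP; have [mQ' hm'] := mate_spec p'P.
have [emm|nmm] := eqVneq (mate p') (mate p); last exact: disjoint_family_mem Qs_disj mQ' mQ nmm.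
have ll : last x p' = last x p by apply: tgt_inj; rewrite ?last_Ps_in // -hm -hm' emm.
by move: (mem_last_Ps p'P); rewrite ll (disjointFr dpp' (mem_last_Ps pP)).
Qed.

Lemma splice_linkage : exists2 ps, size ps = size Ps & linkage e A B ps.
Proof.
exists [seq p ++ mate p | p <- Ps]; first by rewrite size_map.
rewrite /linkage all_map /disjoint_family pairwise_map; apply/andP; split.
  by apply/allP=> p /walk_splice.
by apply: (sub_in_pairwise _ (allss Ps) Ps_disj) => p p' pP p'P /(disjoint_splice pP p'P).
Qed.

End Splice.

Lemma linkage_across_separator e x y A B Y k : reflexive e -> e x y -> x != y ->
  separator (del_edge e x y) A B Y -> #|Y| < k ->
  (forall S, separator e A B S -> k <= #|S|) ->
  (forall A' B', (forall S, separator (del_edge e x y) A' B' S -> k <= #|S|) ->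
     exists2 ps, size ps = k & linkage (del_edge e x y) A' B' ps) ->
  exists2 ps, size ps = k & linkage e A B ps.
Proof.
set e' := del_edge e x y => e_refl exy xy Ysep Yk sepk IH.
have X1sep := separator_del_edge_src Ysep; have X2sep := separator_del_edge_dst Ysep.
have xY : x \notin Y := notin_card_setU1 Yk (sepk _ X1sep).
have yY : y \notin Y := notin_card_setU1 Yk (sepk _ X2sep).
have [Ps szP /andP[wP dP]] : exists2 Ps, size Ps = k & linkage e' A (x |: Y) Ps.
  by apply: IH => S /(separator_entering (setU11 x Y) X1sep)/sepk.
have [Qs szQ /andP[wQ dQ]] : exists2 Qs, size Qs = k & linkage e' (y |: Y) B Qs.
  by apply: IH => S /(separator_leaving (setU11 y Y) X2sep)/sepk.
have [Ps' szP' /andP[wP' dP']] : exists2 Ps', size Ps' = size Ps &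
    all (walk_entering e' A (x |: Y)) Ps' && disjoint_family Ps'.
  apply: disjoint_family_shrink dP => p /(allP wP) pw.
  exact: walk_cut_entering pw (walk_meets_target pw).
have [Qs' szQ' /andP[wQ' dQ']] : exists2 Qs', size Qs' = size Qs &
    all (walk_leaving e' (y |: Y) B) Qs' && disjoint_family Qs'.
  apply: disjoint_family_shrink dQ => q /(allP wQ) qw.
  exact: walk_cut_leaving qw (walk_meets_source qw).
have e'e : subrel e' e by move=> u v /andP[].
have [|ps szps lk] := splice_linkage e_refl e'e exy xY yY Ysep wP' dP' wQ' dQ'.
  by rewrite szQ' szQ cardsU1 yY add1n.
by exists ps; rewrite // szps szP' szP.
Qed.

(* Reflexivity lets a walk stay at a vertex, so two walks meeting at a vertex
   of the separator can be concatenated without removing the repetition. *)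
Theorem menger e A B k : reflexive e -> (forall S, separator e A B S -> k <= #|S|) ->
  exists2 ps, size ps = k & linkage e A B ps.
Proof.
have [n] := ubnP #|edges e|; elim: n => // n IH in e A B *.
rewrite ltnS => en e_refl sepk.
have [e0|[[x y]]] := set_0Vmem (edges e).
  apply: linkage_no_edges sepk => u v euv; apply/eqP; apply: contraT => uv.
  by have := in_set0 (u, v); rewrite -e0 inE /= euv uv.
rewrite inE /= => /andP[exy xy]; set e' := del_edge e x y.
have e'_lt : #|edges e'| < n := leq_trans (card_edges_del_edge exy xy) en.
have IH' A' B' := IH e' A' B' e'_lt (del_edge_refl e_refl xy).
case: (classic (exists2 Y, separator e' A B Y & #|Y| < k)) => [[Y Ysep Yk]|noY].
  exact: linkage_across_separator Ysep Yk sepk IH'.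
have [|ps szps lk] := IH' A B.
  by move=> S Ssep; rewrite leqNgt; apply/negP=> Sk; apply: noY; exists S.
by exists ps; last by apply: linkage_sub lk => u v /andP[].
Qed.

End Menger.

Section Fans.
Variables (V : finType) (E : rel V) (f : nat) (F : {set V}).
Implicit Types (A B X S Z : {set V}) (p : seq V) (ps : seq (seq V)).

(* [reach E f F X Y] unfolds to [Y = set0 \/ forall y, y \in Y -> fan X y]. *)
Definition fan X y := exists ps : seq (seq V),
  [/\ f.+1 <= size ps, all (fun p => XYpath E X y p && excludes F p) ps & disjoint_paths y ps].

Lemma XYpath_walk X y p : XYpath E X y p -> walk E X [set y] p.
Proof. by case: p => //= x s /and4P[-> -> /eqP -> _]; rewrite set11. Qed.

Lemma fan_avoid X y S : fan X y -> #|S| <= f ->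
  exists2 p, XYpath E X y p && excludes F p & [disjoint p & S :\ y].
Proof.
case=> ps [szps allps dps] Sf.
have [meet|/allPn[p pps]] := boolP (all (fun p => ~~ [disjoint p & S :\ y]) ps); last first.
  by rewrite negbK => dp; exists p => //; exact: (allP allps).
pose qs := [seq [seq v <- p | v \in S :\ y] | p <- ps].
have qs_head : {in qs, forall q, head y q \in q}.
  move=> q /mapP[p pps ->]; move: (allP meet p pps).
  by rewrite disjoint_has negbK has_filter; case: [seq v <- p | _] => //= v s _; exact: mem_head.
have dqs : disjoint_family qs.
  apply/(pairwiseP [::]) => i j; rewrite !inE size_map => ip jp ij.
  rewrite !(nth_map [::]) // disjoint_has; apply/hasPn=> v; rewrite !mem_filter.
  case/andP=> vS vi; apply/negP=> /andP[_ vj].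
  by move: vS; rewrite (dps i j ij jp v vi vj) !inE eqxx.
have sub : {subset map (head y) qs <= enum (S :\ y)}.
  move=> v /mapP[q qQ ->]; rewrite mem_enum; have := qs_head q qQ.
  by case/mapP: qQ => p _ ->; rewrite mem_filter => /andP[].
have := uniq_leq_size (uniq_map_disjoint_family qs_head dqs) sub.
rewrite !size_map -cardE => /(leq_trans szps).
by rewrite ltnNge (leq_trans (subset_leq_card (subsetDl S [set y])) Sf).
Qed.

Lemma fan_glue_walk A B c S : c \notin B -> fan (A :|: B) c -> {in B, forall b, fan A b} ->
  #|S| <= f -> exists2 p, walk E A [set c] p && excludes F p & [disjoint p & S :\ c].
Proof.
move=> cB fc fB Sf.
have [[|a s] // /andP[/and4P[aAB pas /eqP lc _] Fp] dp] := fan_avoid fc Sf.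
move: aAB; rewrite inE => /orP[aA|aB].
  by exists (a :: s); rewrite //= aA pas lc set11.
have [[|a' r] // /andP[/XYpath_walk wr Fr] dr] := fan_avoid (fB a aB) Sf.
exists (a' :: r ++ s).
  rewrite (walk_cat wr) /=; last by rewrite set11 pas lc set11.
  by move: Fr Fp; rewrite /excludes /= all_cat => /andP[-> ->] /andP[_ ->].
move: dp; rewrite disjoint_cons -cat_cons disjoint_cat => /andP[aSc ->]; rewrite andbT.
rewrite disjoint_has; apply/hasPn=> w wr'; apply: contra aSc; rewrite !inE => /andP[wc wS].
have /eqP wa : w == a by move: (disjointFr dr wr'); rewrite !inE wS andbT => /negbFE.
by rewrite -wa wc wS.
Qed.

Definition induced_refl Z : rel V := fun u v => (u == v) || [&& E u v, u \notin Z & v \notin Z].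

Lemma induced_refl_refl Z : reflexive (induced_refl Z).
Proof. by move=> u; rewrite /induced_refl eqxx. Qed.

Lemma path_induced_refl Z h t : path E h t -> [disjoint h :: t & Z] -> path (induced_refl Z) h t.
Proof.
elim: t h => //= z t IH h /andP[ehz pzt]; rewrite !disjoint_cons => /and3P[hZ zZ dt].
by rewrite IH ?disjoint_cons ?zZ // /induced_refl ehz hZ zZ orbT.
Qed.

Lemma path_induced_refl_disjoint Z h t :
  path (induced_refl Z) h t -> h \notin Z -> [disjoint h :: t & Z].
Proof.
elim: t h => [|z t IH] h /=; first by rewrite disjoint_cons disjoint_has andbT.
by case/andP=> /orP[/eqP <-|/and3P[_ _ zZ]] pzt hZ; rewrite disjoint_cons hZ IH.
Qed.

Lemma walk_to_in_nbrs A c S p : c \notin A -> walk E A [set c] p -> excludes F p ->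
  [disjoint p & S :\ c] ->
  exists2 q, walk (induced_refl (c |: F)) A [set b | E b c] q & [disjoint q & S].
Proof.
case: p => // a s cA /and3P[aA pas /set1P lc] Fp dp.
have cs : c \in a :: s by rewrite -lc mem_last.
have := path_cut_first (P := pred1 c) pas; rewrite has_pred1 => /(_ cs).
case=> t [s' [es pat /eqP ltc nc]].
case/lastP: t es pat ltc nc => [_ _ ac|t b es]; first by rewrite -ac aA in cA.
rewrite rcons_path last_rcons belast_rcons has_pred1 => /andP[pat Ebc] bc ct; subst b.
have ts : {subset a :: t <= a :: s}.
  by move=> w; rewrite !inE es mem_cat mem_rcons inE => /predU1P[->|->]; rewrite ?eqxx ?orbT.
have tZ : [disjoint a :: t & c |: F].
  rewrite disjoint_has; apply/hasPn=> w wt; rewrite !inE negb_or (allP Fp w (ts w wt)) andbT.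
  by apply: contra ct => /eqP <-.
exists (a :: t); first by rewrite /= aA path_induced_refl // inE Ebc.
rewrite disjoint_has; apply/hasPn=> w wt; have wc : w != c by apply: contraNneq ct => <-.
by move: (disjointFr dp (ts w wt)); rewrite !inE wc => /negbT.
Qed.

Definition close_walk c p := if p is h :: t then h :: shorten h (rcons t c) else [::].

Lemma close_walk_spec A c p : c \notin F -> [disjoint A & c |: F] ->
  walk (induced_refl (c |: F)) A [set b | E b c] p ->
  [/\ XYpath E A c (close_walk c p), excludes F (close_walk c p)
    & {subset close_walk c p <= c :: p}].
Proof.
move=> cF dA; case: p => // h t /and3P[hA pt]; rewrite inE => lE.
have dt := path_induced_refl_disjoint pt (negbT (disjointFr dA hA)).
have notF w : w \in c :: h :: t -> w \notin F.
  by rewrite inE => /predU1P[->//|wt]; move: (disjointFr dt wt); rewrite !inE => /negbT/norP[].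
have pR : path (fun u v => (u == v) || E u v) h (rcons t c).
  rewrite rcons_path lE orbT andbT; apply: sub_path pt => u v.
  by case/orP=> [->//|/and3P[-> _ _]]; rewrite orbT.
rewrite /=; move: (last_rcons h t c); case: (shortenP pR) => t' pt' ut' sub lt'.
have sub' : {subset h :: t' <= c :: h :: t}.
  move=> w; rewrite inE => /predU1P[->|/sub]; first by rewrite !inE eqxx orbT.
  by rewrite mem_rcons !inE => /predU1P[->|->]; rewrite ?eqxx ?orbT.
have Ft' : excludes F (h :: t') by apply/allP=> w /sub'; apply: notF.
by split=> //; apply/and4P; split; rewrite ?lt' ?(uniq_path_refl pt').
Qed.

Lemma fan_of_linkage A c ps : c \notin F -> [disjoint A & c |: F] -> f.+1 <= size ps ->
  linkage (induced_refl (c |: F)) A [set b | E b c] ps -> fan A c.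
Proof.
move=> cF dA szps /andP[wps dps].
have spec p : p \in ps -> _ := fun pps => close_walk_spec cF dA (allP wps p pps).
exists (map (close_walk c) ps); split; first by rewrite size_map.
  by apply/allP=> _ /mapP[p /spec[XYp Fp _] ->]; apply/andP.
move=> i j ij; rewrite size_map => jp v; have ip := ltn_trans ij jp.
rewrite !(nth_map [::]) //.
have [_ _ subi] := spec _ (mem_nth [::] ip); have [_ _ subj] := spec _ (mem_nth [::] jp).
move=> /subi; rewrite inE => /predU1P[//|vi] /subj; rewrite inE => /predU1P[//|vj].
move/(pairwiseP [::]): dps => /(_ i j ip jp ij).
by rewrite disjoint_has => /hasPn/(_ v vi); rewrite vj.
Qed.

Lemma fan_trans A B c : c \notin A -> c \notin B -> c \notin F -> [disjoint A & F] ->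
  fan (A :|: B) c -> {in B, forall b, fan A b} -> fan A c.
Proof.
move=> cA cB cF dAF fc fB.
have dA : [disjoint A & c |: F].
  rewrite disjoints_subset; apply/subsetP=> a aA.
  by rewrite !inE (disjointFr dAF aA) orbF; apply: contraNneq cA => <-.
have [|ps szps lk] :=
  @menger _ (induced_refl (c |: F)) A [set b | E b c] f.+1 (induced_refl_refl _).
  move=> S Ssep; rewrite leqNgt ltnS; apply/negP=> /(fan_glue_walk cB fc fB)[p /andP[pw Fp] dp].
  by have [q /Ssep] := walk_to_in_nbrs cA pw Fp dp => /negbTE ->.
by apply: fan_of_linkage cF dA _ lk; rewrite szps.
Qed.

End Fans.

Theorem lemma8 (V : finType) (E : rel V) (f : nat)
  (Hsimple : forall v, ~~ E v v)
  (Hcond : forall X Y Z : {set V},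
      [disjoint X & Y] -> [disjoint X & Z] -> [disjoint Y & Z] ->
      X :|: Y :|: Z = setT -> X != set0 -> Y != set0 -> #|Z| <= f ->
      reach E f Z X Y \/ reach E f Z Y X)
  (A B C F : {set V})
  (dAB : [disjoint A & B]) (dAC : [disjoint A & C]) (dAF : [disjoint A & F])
  (dBC : [disjoint B & C]) (dBF : [disjoint B & F]) (dCF : [disjoint C & F])
  (HF : #|F| <= f) (HA : A != set0) (HB : B != set0) (HC : C != set0) :
  reach E f F A B -> reach E f F (A :|: B) C -> reach E f F A (B :|: C).
Proof.
case=> [B0|fanB]; first by rewrite B0 eqxx in HB.
case=> [C0|fanC]; first by rewrite C0 eqxx in HC.
right=> c; rewrite inE => /orP[cB|cC]; first exact: fanB.
apply: fan_trans (fanC c cC) fanB => //.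
- by rewrite (disjointFl dAC cC).
- by rewrite (disjointFl dBC cC).
- by rewrite (disjointFr dCF cC).
Qed.
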